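(* Let $\mathcal{A}$ be a one-dimensional cellular automaton which is not sensitive to initial conditions, and let $\mu$ be any complete Bernoulli measure on $Q^{\mathbb{Z}}$. Then the set $L_\mu(\mathcal{A})$ of $\mu$-persistent words of $\mathcal{A}$ is exactly the set of bricks of wall for $\mathcal{A}$.
   Context: A one-dimensional cellular automaton (CA) $\mathcal{A}$ is given by a finite alphabet $Q$, a radius $r\ge 0$ and a local rule $\delta:Q^{2r+1}\to Q$; it acts on configurations $c\in Q^{\mathbb{Z}}$ by $\mathcal{A}(c)_i=\delta(c_{i-r},\dots,c_{i+r})$. For a word $u\in Q^*$ and $i\in\mathbb{Z}$, the cylinder is $[u]_i=\{c\in Q^{\mathbb{Z}}: c_ic_{i+1}\cdots c_{i+|u|-1}=u\}$. A Bernoulli measure $\mu$ on $Q^{\mathbb{Z}}$ is given by a probability vector $(p_a)_{a\in Q}$ with $\mu([u]_i)=\prod_{a\in Q}p_a^{|u|_a}$ for all $u,i$, where $|u|_a$ is the number of occurrences of $a$ in $u$; it is complete if $p_a>0$ for all $a$; the uniform measure has $p_a=1/|Q|$. For $n\ge0$, $\mathcal{A}^n\mu$ is the measure $U\mapsto\mu(\mathcal{A}^{-n}(U))$. A word $u\in Q^*$ is vanishing for $(\mathcal{A},\mu)$ if $\lim_{n\to\infty}\mathcal{A}^n\mu([u]_0)=0$, and persistent otherwise; $L_\mu(\mathcal{A})$ denotes the set of persistent words. The $\mu$-limit set is $\Lambda_\mu(\mathcal{A})=\{c\in Q^{\mathbb{Z}}:\text{every finite subword of }c\text{ lies in }L_\mu(\mathcal{A})\}$.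 Walls: for $u\in Q^*$ let $\langle u\rangle=[u]_{-|u|/2}$ if $|u|$ is even and $\langle u\rangle=[u]_{-(|u|+1)/2}$ if $|u|$ is odd. A wall for $\mathcal{A}$ is a sequence $(w_n)_{n\ge0}$ of nonempty words over $Q$ such that (1) for every $c\in\langle w_0\rangle$ and every $n\ge1$, $\mathcal{A}^n(c)\in\langle w_n\rangle$, and (2) the sequence $(|w_n|)_{n\ge0}$ is non-increasing. The word $w_0$ is the foot of the wall. A word $w$ is a brick of the wall $(w_n)$ if there are integers $p\ge1$, $n_0\ge0$ with $w_{pn+n_0}=w$ for all $n\ge0$. A word is a brick of wall for $\mathcal{A}$ if it is a brick of some wall for $\mathcal{A}$. Sensitivity: equip $Q^{\mathbb{Z}}$ with the Cantor metric $d(c,c')=2^{-\min\{|i|:c_i\neq c'_i\}}$. $\mathcal{A}$ is sensitive to initial conditions if there is $\varepsilon>0$ such that for every $c$ and every $\eta>0$ there exist $c'$ with $d(c,c')<\eta$ and $n\ge0$ with $d(\mathcal{A}^n(c),\mathcal{A}^n(c'))\ge\varepsilon$. *)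

From HB Require Import structures.
From mathcomp Require Import all_boot all_order all_algebra.
From mathcomp Require Import boolp classical_sets reals topology normedtype sequences.

Set Implicit Arguments.
Unset Strict Implicit.
Unset Printing Implicit Defensive.
Import Order.TTheory GRing.Theory Num.Theory.
Import numFieldNormedType.Exports.
Local Open Scope classical_set_scope.
Local Open Scope ring_scope.

Definition config (Q : finType) := int -> Q.

(* Global map of the CA with alphabet Q, radius r and local rule
   delta : Q^{2r+1} -> Q (window entries indexed 0..2r, i.e. c_{i-r}..c_{i+r}). *)
Definition ca_map (Q : finType) (r : nat)
  (delta : {ffun 'I_(2 * r + 1) -> Q} -> Q) (c : config Q) : config Q :=
  fun i => delta [ffun j : 'I_(2 * r + 1) => c (i - r%:Z + (j : nat)%:Z)].

Definition ca_iter (Q : finType) (r : nat)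
  (delta : {ffun 'I_(2 * r + 1) -> Q} -> Q) (n : nat) (c : config Q) : config Q :=
  iter n (ca_map delta) c.

Definition cyl (Q : finType) (u : seq Q) (i : int) (c : config Q) : Prop :=
  forall j : nat, (j < size u)%N -> forall x0 : Q, c (i + j%:Z) = nth x0 u j.

Definition ccyl (Q : finType) (u : seq Q) (c : config Q) : Prop :=
  if ~~ odd (size u) then cyl u (- (size u %/ 2)%:Z) c
  else cyl u (- ((size u).+1 %/ 2)%:Z) c.

(* Cantor-metric sensitivity, with d(c,c') < eta written as "c, c' agree on
   [-m,m]" and d(x,y) >= eps written as "x, y differ somewhere in [-k,k]"
   (eps = 2^-k, eta = 2^-m). *)
Definition agree_on (Q : finType) (m : nat) (c c' : config Q) : Prop :=
  forall i : int, (`|i| <= m)%N -> c i = c' i.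

Definition sensitive (Q : finType) (r : nat)
  (delta : {ffun 'I_(2 * r + 1) -> Q} -> Q) : Prop :=
  exists k : nat, forall (c : config Q) (m : nat),
    exists (c' : config Q) (n : nat),
      agree_on m c c' /\ ~ agree_on k (ca_iter delta n c) (ca_iter delta n c').

Definition complete_bernoulli (R : realType) (Q : finType) (p : Q -> R) : Prop :=
  (forall a, 0 < p a) /\ \sum_(a : Q) p a = 1.

(* (A^n mu)([u]_0) = mu(A^{-n}([u]_0)).  A^{-n}([u]_0) depends only on the
   coordinates -nr .. |u|-1+nr, so it is the disjoint union of the cylinders
   [v]_{-nr}, |v| = |u| + 2nr, contained in it; mu of a cylinder [v]_i is
   prod_k p_{v_k}. *)
Definition pushforward_cyl (R : realType) (Q : finType) (r : nat)
  (delta : {ffun 'I_(2 * r + 1) -> Q} -> Q) (p : Q -> R) (n : nat) (u : seq Q) : R :=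
  \sum_(v : (size u + 2 * (n * r)).-tuple Q |
          `[< forall c : config Q, cyl v (- (n * r)%:Z) c ->
                cyl u 0 (ca_iter delta n c) >])
     \prod_(x <- v) p x.

Definition vanishing (R : realType) (Q : finType) (r : nat)
  (delta : {ffun 'I_(2 * r + 1) -> Q} -> Q) (p : Q -> R) (u : seq Q) : Prop :=
  (fun n => pushforward_cyl delta p n u) @ \oo --> (0 : R).

Definition persistent (R : realType) (Q : finType) (r : nat)
  (delta : {ffun 'I_(2 * r + 1) -> Q} -> Q) (p : Q -> R) (u : seq Q) : Prop :=
  ~ vanishing delta p u.

Definition is_wall (Q : finType) (r : nat)
  (delta : {ffun 'I_(2 * r + 1) -> Q} -> Q) (w : nat -> seq Q) : Prop :=
  (forall n, w n != [::]) /\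
  (forall (c : config Q), ccyl (w 0%N) c ->
     forall n : nat, (1 <= n)%N -> ccyl (w n) (ca_iter delta n c)) /\
  (forall n, (size (w n.+1) <= size (w n))%N).

Definition brick_of (Q : finType) (w : nat -> seq Q) (u : seq Q) : Prop :=
  exists (p n0 : nat), (1 <= p)%N /\ forall n : nat, w (p * n + n0)%N = u.

Definition brick_of_wall (Q : finType) (r : nat)
  (delta : {ffun 'I_(2 * r + 1) -> Q} -> Q) (u : seq Q) : Prop :=
  exists w : nat -> seq Q, is_wall delta w /\ brick_of w u.

(* A brick [u = w_(pn+n0)] of a wall with foot [w_0] satisfies
   A^n mu([u]_0) >= mu(<w_0>) > 0 along the progression [pn+n0], so it is
   persistent.  Conversely, a non-sensitive CA has a configuration [c0] such that
   every configuration agreeing with [c0] on [-m, m] keeps agreeing with it on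
   [-r, r] forever.  No information crosses the two columns above two copies of
   this blocking word, so a word carrying one copy on each side of the window of
   [u] determines the whole future of that window; such flanked words have
   probability close to 1 once the flanks are long.  The periodic extension of a
   determining word evolves eventually periodically in time, so if [u] appears
   infinitely often in its window, these windows form a wall of which [u] is a
   brick.  Hence if [u] is not a brick, at late times [[u]_0] is only reached
   from non-determining words, whose mass is arbitrarily small. *)

From HB Require Import structures.
From mathcomp Require Import all_boot all_order all_algebra.
From mathcomp Require Import boolp classical_sets reals topology normedtype sequences.
From mathcomp Require Import zify ring lra.

Set Implicit Arguments.
Unset Strict Implicit.
Unset Printing Implicit Defensive.
Import Order.TTheory GRing.Theory Num.Theory.
Import numFieldNormedType.Exports.
Local Open Scope ring_scope.

Section WordMean.
Variables (R : realType) (Q : finType) (p : Q -> R).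

Fixpoint wmean (n : nat) (F : seq Q -> R) : R :=
  if n is n'.+1 then \sum_(q : Q) p q * wmean n' (fun s => F (q :: s)) else F [::].

Lemma eq_wmean n F G : (forall s, size s = n -> F s = G s) -> wmean n F = wmean n G.
Proof.
elim: n F G => [|n IH] F G FG /=; first exact: FG.
by apply: eq_bigr => q _; congr (_ * _); apply: IH => s sz; apply: FG; rewrite /= sz.
Qed.

Lemma wmeanD n F G : wmean n (fun s => F s + G s) = wmean n F + wmean n G.
Proof.
elim: n F G => [|n IH] F G //=.
by rewrite -big_split; apply: eq_bigr => q _; rewrite IH mulrDr.
Qed.

Lemma wmeanZ n c F : wmean n (fun s => c * F s) = c * wmean n F.
Proof.
elim: n F => [|n IH] F //=.
by rewrite mulr_sumr; apply: eq_bigr => q _; rewrite IH mulrCA.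
Qed.

Lemma wmean_cat m n F :
  wmean (m + n) F = wmean m (fun x => wmean n (fun y => F (x ++ y))).
Proof. by elim: m F => [|m IH] F //=; apply: eq_bigr => q _; rewrite IH. Qed.

Lemma wmean_tuple n F :
  \sum_(v : n.-tuple Q) F (val v) * \prod_(x <- val v) p x = wmean n F.
Proof.
elim: n F => [|n IH] F /=.
  rewrite (big_pred1 [tuple]) /= ?big_nil ?mulr1 // => t.
  by apply/esym/eqP; apply: tuple0.
rewrite (reindex (fun qt : Q * n.-tuple Q => cons_tuple qt.1 qt.2)) /=; last first.
  exists (fun t : n.+1.-tuple Q => (thead t, behead_tuple t)).
    by case=> q t _; rewrite theadE; congr pair; apply: val_inj.
  by move=> t _; apply: val_inj; case: t => [[|a s] //= _].
rewrite -(pair_big xpredT xpredT (fun q (t : n.-tuple Q) =>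
  F (q :: val t) * \prod_(x <- q :: val t) p x)) /=.
apply: eq_bigr => q _; rewrite -IH mulr_sumr; apply: eq_bigr => t _.
by rewrite big_cons mulrCA.
Qed.

Hypothesis p_ge0 : forall a, 0 <= p a.
Hypothesis p_sum : \sum_(a : Q) p a = 1.

Lemma wmean_const n c : wmean n (fun _ => c) = c.
Proof.
elim: n => [|n IH] //=.
by under eq_bigr do rewrite IH; rewrite -mulr_suml p_sum mul1r.
Qed.

Lemma ler_wmean n F G : (forall s, size s = n -> F s <= G s) -> wmean n F <= wmean n G.
Proof.
elim: n F G => [|n IH] F G FG /=; first exact: FG.
apply: ler_sum => q _; apply: ler_wpM2l => //.
by apply: IH => s sz; apply: FG; rewrite /= sz.
Qed.

Lemma wmean_ge0 n F : (forall s, size s = n -> 0 <= F s) -> 0 <= wmean n F.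
Proof. by move=> F_ge0; rewrite -(wmean_const n 0); apply: ler_wmean. Qed.

Lemma wmean_indicator_le1 n (b : seq Q -> bool) : wmean n (fun s => (b s)%:R) <= 1.
Proof.
rewrite -[X in _ <= X](wmean_const n 1); apply: ler_wmean => s _.
by rewrite lern1 leq_b1.
Qed.

Lemma wmean_window N k M F : (k + M <= N)%N ->
  wmean N (fun v => F (take M (drop k v))) = wmean M F.
Proof.
move=> kMN; have -> : N = (k + (M + (N - k - M)))%N by lia.
rewrite wmean_cat -[RHS](wmean_const k); apply: eq_wmean => x sx.
rewrite wmean_cat; apply: eq_wmean => y sy.
rewrite -[RHS](wmean_const (N - k - M) (F y)); apply: eq_wmean => z _.
by rewrite drop_size_cat // take_size_cat.
Qed.

Lemma wmean_eq w : wmean (size w) (fun s => (s == w)%:R) = \prod_(x <- w) p x.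
Proof.
elim: w => [|a w IH] /=; first by rewrite big_nil.
rewrite big_cons (bigD1 a) //= big1 ?addr0 => [|q /negbTE qa].
  by rewrite -IH; congr (_ * _); apply: eq_wmean => s _; rewrite eqseq_cons eqxx.
rewrite (@eq_wmean _ _ (fun _ => 0)) ?wmean_const ?mulr0 // => s _.
by rewrite eqseq_cons qa.
Qed.

Lemma wmean_neq w : wmean (size w) (fun s => (s != w)%:R) = 1 - \prod_(x <- w) p x.
Proof.
rewrite (@eq_wmean _ _ (fun s => 1 + (-1) * (s == w)%:R)) => [|s _].
  by rewrite wmeanD wmeanZ wmean_const wmean_eq mulN1r.
by case: (s == w) => /=; rewrite ?mulr1 ?mulr0 ?addr0 ?subrr.
Qed.

End WordMean.

Lemma exists_expr_le (R : realType) (x eps : R) : 0 <= x < 1 -> 0 < eps ->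
  exists J, x ^+ J <= eps.
Proof.
move=> /andP[x0 x1] eps0; have : `|x| < 1 by rewrite ger0_norm.
move=> /cvg_expr/cvgrPdist_le/(_ eps eps0) [N _ /(_ N (leqnn N))].
by rewrite sub0r normrN ger0_norm ?exprn_ge0 //; exists N.
Qed.

Section Cylinders.
Variable Q : finType.

Lemma cyl_take_drop (w : seq Q) x c n k :
  cyl w x c -> cyl (take n (drop k w)) (x + k%:Z) c.
Proof.
move=> cw j; rewrite size_take_min size_drop => jlt y0.
rewrite nth_take ?nth_drop -?(cw (k + j)%N) ?PoszD ?addrA //; lia.
Qed.

Lemma cyl_agree (w : seq Q) x (c c' : config Q) :
  cyl w x c -> cyl w x c' -> forall i, x <= i < x + (size w)%:Z -> c i = c' i.
Proof.
move=> cw c'w i i_in; have [x0 _] : exists x0 : Q, True by exists (c i).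
have iw : (absz (i - x)%R < size w)%N by lia.
by have := cw _ iw x0; have := c'w _ iw x0; rewrite gez0_abs ?subrKC //; [move=> -> -> | lia].
Qed.

Lemma eq_cyl0 (u : seq Q) (c c' : config Q) :
  (forall j : nat, (j < size u)%N -> c j%:Z = c' j%:Z) -> cyl u 0 c' -> cyl u 0 c.
Proof. by move=> cc' c'u j ju y0; rewrite add0r cc' // -(c'u j ju y0) add0r. Qed.

Lemma cyl0_mkseq (u : seq Q) c : cyl u 0 c -> mkseq (fun j : nat => c j%:Z) (size u) = u.
Proof.
move=> cu; have [x0 _] : exists x0 : Q, True by exists (c 0).
apply: (@eq_from_nth _ x0); rewrite size_mkseq // => j ju.
by rewrite nth_mkseq // -(cu j ju x0) add0r.
Qed.

Lemma ccylE (w : seq Q) c : ccyl w c <-> cyl w (- ((size w).+1 %/ 2)%:Z) c.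
Proof.
rewrite /ccyl; case: ifP => // /negbTE even_w.
by rewrite !divn2 /= uphalf_half even_w.
Qed.

End Cylinders.

Section Locality.
Variables (Q : finType) (r : nat) (delta : {ffun 'I_(2 * r + 1) -> Q} -> Q).
Local Notation A := (ca_iter delta).

Lemma ca_map_local (c c' : config Q) i :
  (forall j : int, i - r%:Z <= j <= i + r%:Z -> c j = c' j) ->
  ca_map delta c i = ca_map delta c' i.
Proof.
move=> cc'; congr delta; apply/ffunP => j; rewrite !ffunE.
by apply: cc'; have := ltn_ord j; lia.
Qed.

Lemma ca_iter_shift n (c : config Q) (s : int) :
  A n (fun i => c (i + s)) = fun i => A n c (i + s).
Proof.
elim: n => [|n IH] //; rewrite /ca_iter /= -!/(ca_iter _ _ _) IH.
apply: funext => i; congr delta; apply/ffunP => j; rewrite !ffunE.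
by congr (A n c); ring.
Qed.

Lemma ca_iter_periodic (c : config Q) (L : int) :
  (forall i, c (i + L) = c i) -> forall n i, A n c (i + L) = A n c i.
Proof.
move=> cper n i; have cL : (fun i => c (i + L)) = c by apply: funext.
by rewrite -[in RHS]cL ca_iter_shift.
Qed.

Lemma ca_iter_light_cone n (x y : int) (c c' : config Q) :
  (forall i, x - (n * r)%:Z <= i < y + (n * r)%:Z -> c i = c' i) ->
  forall i, x <= i < y -> A n c i = A n c' i.
Proof.
elim: n x y => [|n IH] x y cc' i xiy.
  by apply: cc'; rewrite mul0n subr0 addr0.
apply: ca_map_local => j ij; apply: (IH (x - r%:Z) (y + r%:Z)); last by lia.
by move=> k xky; apply: cc'; rewrite mulSn; lia.
Qed.

Lemma ca_iter_between_columns (y1 y2 : int) (c c' : config Q) :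
  (forall n i, (y1 - r%:Z <= i <= y1 + r%:Z) || (y2 - r%:Z <= i <= y2 + r%:Z) ->
     A n c i = A n c' i) ->
  (forall i, y1 - r%:Z <= i <= y2 + r%:Z -> c i = c' i) ->
  forall n i, y1 - r%:Z <= i <= y2 + r%:Z -> A n c i = A n c' i.
Proof.
move=> columns cc'; elim=> [|n IH] i i_in; first exact: cc'.
have [on_column|] := boolP ((y1 - r%:Z <= i <= y1 + r%:Z) || (y2 - r%:Z <= i <= y2 + r%:Z)).
  exact: columns.
rewrite negb_or !negb_and -!ltNge => /andP[i_y1 i_y2].
by apply: ca_map_local => j ij; apply: IH; lia.
Qed.

End Locality.

Section Periodicity.

Lemma periodicZ (T : Type) (f : int -> T) (L : int) :
  (forall i, f (i + L) = f i) -> forall (z : int) i, f (i + z * L) = f i.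
Proof.
move=> fper; have fperN k i : f (i + k%:Z * L) = f i.
  elim: k i => [|k IH] i; first by rewrite mul0r addr0.
  by rewrite -addn1 PoszD mulrDl mul1r addrA fper IH.
case=> k i; first exact: fperN.
by rewrite -(fperN k.+1) NegzE mulNr addrNK.
Qed.

Lemma eq_periodic (T : Type) (f g : int -> T) (L : nat) : (0 < L)%N ->
  (forall i, f (i + L%:Z) = f i) -> (forall i, g (i + L%:Z) = g i) ->
  (forall j : nat, (j < L)%N -> f j%:Z = g j%:Z) -> f = g.
Proof.
move=> L0 fper gper fg; apply: funext => i.
have L0' : L%:Z != 0 by lia.
have L0z : 0 < L%:Z by lia.
rewrite (divz_eq i L%:Z) addrC (periodicZ fper) (periodicZ gper).
have i_ge0 := modz_ge0 i L0'; have i_lt := ltz_pmod i L0z.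
by rewrite -[(i %% L%:Z)%Z]gez0_abs // fg //; lia.
Qed.

Lemma finite_collision (T : finType) (g : nat -> T) :
  exists a b, (a < b)%N /\ g a = g b.
Proof.
apply: contrapT => no_collision.
have inj : injective (fun k : 'I_#|T|.+1 => g k).
  move=> a b gab; apply: val_inj; case: (ltngtP a b) => // [ab|ba]; exfalso.
    by apply: no_collision; exists a, b.
  by apply: no_collision; exists b, a.
by have := leq_card _ inj; rewrite card_ord ltnn.
Qed.

Lemma iter_eventually_periodic (T : Type) (f : T -> T) x a b :
  (a < b)%N -> iter a f x = iter b f x ->
  forall n k, (a <= n)%N -> iter (n + k * (b - a)) f x = iter n f x.
Proof.
move=> ab Eab n k an; elim: k => [|k IH]; first by rewrite mul0n addn0.
have -> : (n + k.+1 * (b - a) = n + k * (b - a) - a + b)%N by rewrite mulSn; nia.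
by rewrite iterD -Eab -iterD subnK // (leq_trans an (leq_addr _ _)).
Qed.

Variables (Q : finType) (r : nat) (delta : {ffun 'I_(2 * r + 1) -> Q} -> Q).
Local Notation A := (ca_iter delta).

Lemma ca_iter_eventually_periodic (c : config Q) (L : nat) :
  (0 < L)%N -> (forall i, c (i + L%:Z) = c i) ->
  exists n0 P, (0 < P)%N /\ forall n k, (n0 <= n)%N -> A (n + k * P) c = A n c.
Proof.
move=> L0 cper.
have [a [b [ab Eab]]] := finite_collision (fun n => [ffun j : 'I_L => A n c j%:Z]).
exists a, (b - a)%N; split; first by rewrite subn_gt0.
apply: iter_eventually_periodic ab _.
apply: (eq_periodic L0); try exact: ca_iter_periodic.
by move=> j jL; have /ffunP/(_ (Ordinal jL)) := Eab; rewrite !ffunE.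
Qed.

Definition periodize (x0 : Q) (w : seq Q) (x : int) : config Q :=
  fun i => nth x0 w (absz ((i - x) %% (size w)%:Z)%Z).

Lemma cyl_periodize x0 w x : cyl w x (periodize x0 w x).
Proof.
move=> j jw y0; rewrite /periodize addrAC subrr add0r modz_small; last by lia.
exact: set_nth_default.
Qed.

Lemma periodize_periodic x0 w x i :
  periodize x0 w x (i + (size w)%:Z) = periodize x0 w x i.
Proof. by rewrite /periodize addrAC modzDr. Qed.

End Periodicity.

Section Walls.
Variables (Q : finType) (r : nat) (delta : {ffun 'I_(2 * r + 1) -> Q} -> Q).
Local Notation A := (ca_iter delta).

Lemma wall_size_le W n : is_wall delta W -> (size (W n) <= size (W 0%N))%N.
Proof. by case=> _ [_ Wsize]; elim: n => // n IH; apply: leq_trans (Wsize n) IH. Qed.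

Lemma wall_cyl W n c : is_wall delta W -> (1 <= n)%N ->
  cyl (W 0%N) (((size (W n)).+1 %/ 2)%:Z - ((size (W 0%N)).+1 %/ 2)%:Z) c ->
  cyl (W n) 0 (A n c).
Proof.
case=> _ [Wcyl _] n1; set h := ((size (W n)).+1 %/ 2)%:Z => cW0.
have /Wcyl/(_ n n1) : ccyl (W 0%N) (fun i => c (i + h)).
  by rewrite ccylE => j jW y0; rewrite -(cW0 j jW y0); congr c; ring.
rewrite ccylE ca_iter_shift => cWn j jn y0.
by rewrite -(cWn j jn y0); congr (A n c); rewrite /h; ring.
Qed.

Definition determining (u : seq Q) (a : nat) (w : seq Q) : Prop :=
  forall c c' : config Q, cyl w (- a%:Z) c -> cyl w (- a%:Z) c' ->
    forall n (j : nat), (j < size u)%N -> A n c j%:Z = A n c' j%:Z.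

Lemma brick_of_determining u a w x0 :
  (0 < size u)%N -> size w = (size u + 2 * a)%N -> determining u a w ->
  (forall N, exists2 n, (N <= n)%N & cyl u 0 (A n (periodize x0 w (- a%:Z)))) ->
  brick_of_wall delta u.
Proof.
move=> u0 sw wdet recurrent.
set c := periodize x0 w (- a%:Z).
have [n1 [P [P0 cper]]] : exists n1 P, (0 < P)%N /\
    forall n k, (n1 <= n)%N -> A (n + k * P) c = A n c.
  by apply: (ca_iter_eventually_periodic _ _ (periodize_periodic x0 w _)); rewrite sw; lia.
have [n0 n0_ge u_at_n0] := recurrent (maxn n1 1).
pose window n := mkseq (fun j : nat => A n c j%:Z) (size u).
pose W n := if n is 0 then w else window n.
have W_window n : (0 < n)%N -> W n = window n by case: n.
exists W; split; last first.
  exists P, n0; split => // k.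
  rewrite W_window; last by lia.
  by rewrite /window addnC mulnC cper ?cyl0_mkseq //; lia.
split; last split.
- by case=> [|n]; rewrite -size_eq0 ?size_mkseq ?sw; lia.
- move=> c'; rewrite ccylE sw => c'w n n0'; rewrite W_window // ccylE size_mkseq.
  set h := ((size u).+1 %/ 2)%N.
  have c'w_shifted : cyl w (- a%:Z) (fun i => c' (i - h%:Z)).
    move=> j jw y0; rewrite -(c'w j jw y0); congr c'.
    have -> : ((size u + 2 * a).+1 %/ 2 = h + a)%N by rewrite -addSn mulnC divnDMl.
    by rewrite PoszD; ring.
  move=> j; rewrite size_mkseq => ju y0; rewrite nth_mkseq //.
  have := wdet _ _ c'w_shifted (cyl_periodize x0 _) n j ju.
  by rewrite ca_iter_shift addrC => <-.
- by case=> [|n]; rewrite /W /window !size_mkseq ?sw ?leq_addr.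
Qed.

End Walls.

Section Blocks.
Variable Q : finType.

Fixpoint has_block (b : seq Q) (J : nat) (x : seq Q) : bool :=
  if J is J'.+1 then (take (size b) x == b) || has_block b J' (drop (size b) x)
  else false.

Lemma has_blockP b J x : has_block b J x ->
  exists2 t, (t < J)%N & take (size b) (drop (t * size b) x) = b.
Proof.
elim: J x => [|J IH] x //= /orP[/eqP bx|/IH[t tJ bt]]; first by exists 0%N; rewrite ?drop0.
by exists t.+1; rewrite // mulSn addnC -drop_drop.
Qed.

Lemma take_drop_take (s : seq Q) i j k :
  (i + j <= k)%N -> take i (drop j (take k s)) = take i (drop j s).
Proof. by move=> ijk; rewrite !take_drop take_takel. Qed.

Definition flanked (b u : seq Q) (J : nat) (w : seq Q) : bool :=
  has_block b J (take (J * size b) w) && has_block b J (drop (J * size b + size u) w).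

Variables (R : realType) (p : Q -> R).
Hypothesis p_ge0 : forall a, 0 <= p a.
Hypothesis p_sum : \sum_(a : Q) p a = 1.

Lemma wmean_no_block b J :
  wmean p (J * size b) (fun x => (~~ has_block b J x)%:R) = (1 - \prod_(x <- b) p x) ^+ J.
Proof.
elim: J => [|J IH]; first by rewrite mul0n /= expr0.
rewrite mulSn wmean_cat exprSr -IH -(wmean_neq p_sum) -wmeanZ.
apply: eq_wmean => x1 x1b; rewrite mulrC -wmeanZ; apply: eq_wmean => x2 _ /=.
rewrite take_size_cat ?drop_size_cat //.
by case: (x1 == b); rewrite /= ?mul0r ?mul1r.
Qed.

Lemma wmean_not_flanked b u J :
  wmean p (size u + 2 * (J * size b)) (fun w => (~~ flanked b u J w)%:R) <=
    (1 - \prod_(x <- b) p x) ^+ J *+ 2.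
Proof.
set JB := (J * size b)%N; set N := (size u + 2 * JB)%N.
have left_block : wmean p N (fun w => (~~ has_block b J (take JB w))%:R) =
    (1 - \prod_(x <- b) p x) ^+ J.
  rewrite -wmean_no_block -(wmean_window p_sum (N := N) (k := 0) (M := JB)); last by lia.
  by apply: eq_wmean => w _; rewrite drop0.
have right_block : wmean p N (fun w => (~~ has_block b J (drop (JB + size u) w))%:R) =
    (1 - \prod_(x <- b) p x) ^+ J.
  rewrite -wmean_no_block -(wmean_window p_sum (N := N) (k := JB + size u) (M := JB));
    last by lia.
  by apply: eq_wmean => w sw; rewrite take_oversize // size_drop sw; lia.
rewrite mulr2n -{1}left_block -right_block -wmeanD.
apply: ler_wmean => // w _; rewrite /flanked negb_and.
by case: (has_block b J _); case: (has_block b J _); rewrite //= ?addr0 ?add0r ?ler_wpDr.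
Qed.

End Blocks.

Section Blocking.
Variables (Q : finType) (r : nat) (delta : {ffun 'I_(2 * r + 1) -> Q} -> Q).
Local Notation A := (ca_iter delta).
Variables (c0 : config Q) (m : nat).
Hypothesis r_le_m : (r <= m)%N.
Hypothesis c0_blocking :
  forall (c : config Q) n, agree_on m c0 c -> agree_on r (A n c0) (A n c).

Definition blocking_word := mkseq (fun j : nat => c0 (j%:Z - m%:Z)) (2 * m + 1).
Local Notation b := blocking_word.

Lemma size_blocking_word : size b = (2 * m + 1)%N.
Proof. exact: size_mkseq. Qed.

Lemma blocking_word_orbit (c : config Q) (y : int) : cyl b (y - m%:Z) c ->
  forall n (i : int), (`|i| <= r)%N -> A n c (y + i) = A n c0 i.
Proof.
move=> cb n i ir.
have c0_agree : agree_on m c0 (fun k => c (k + y)).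
  move=> k km; have kb : (absz (k + m%:Z)%R < size b)%N by rewrite size_blocking_word; lia.
  have := cb _ kb (c0 0); rewrite nth_mkseq -?size_blocking_word //.
  have -> : (absz (k + m%:Z))%:Z = k + m%:Z by lia.
  by rewrite addrK (_ : y - m%:Z + _ = k + y) => [<-|]; last ring.
by have := c0_blocking n c0_agree ir; rewrite ca_iter_shift addrC.
Qed.

Lemma flanked_determining u J w : size w = (size u + 2 * (J * size b))%N ->
  flanked b u J w -> determining delta u (J * size b) w.
Proof.
set B := size b; set JB := (J * B)%N => sw /andP[/has_blockP[t1 t1J b1] /has_blockP[t2 t2J b2]].
have t1B : (t1 * B + B <= JB)%N by rewrite addnC -mulSn leq_mul2r t1J orbT.
have t2B : (t2 * B + B <= JB)%N by rewrite addnC -mulSn leq_mul2r t2J orbT.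
rewrite take_drop_take in b1; last by rewrite addnC.
rewrite drop_drop in b2.
move=> c c' cw c'w n j ju.
pose y1 : int := - JB%:Z + (t1 * B)%:Z + m%:Z.
pose y2 : int := (size u)%:Z + (t2 * B)%:Z + m%:Z.
have block1 d : cyl w (- JB%:Z) d -> cyl b (y1 - m%:Z) d.
  by move=> /(cyl_take_drop (n := B) (k := t1 * B)); rewrite b1 addrK.
have block2 d : cyl w (- JB%:Z) d -> cyl b (y2 - m%:Z) d.
  have -> : y2 - m%:Z = - JB%:Z + (t2 * B + (JB + size u))%N%:Z.
    by rewrite /y2 !PoszD; ring.
  by move=> /(cyl_take_drop (n := B) (k := t2 * B + (JB + size u))); rewrite b2.
have sB : B = (2 * m + 1)%N := size_blocking_word.
have columns k i : (y1 - r%:Z <= i <= y1 + r%:Z) || (y2 - r%:Z <= i <= y2 + r%:Z) ->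
    A k c i = A k c' i.
  case/orP=> i_in.
    have ir : (`|(i - y1)%R| <= r)%N by lia.
    by rewrite -(subrKC y1 i) !(blocking_word_orbit (block1 _ _)).
  have ir : (`|(i - y2)%R| <= r)%N by lia.
  by rewrite -(subrKC y2 i) !(blocking_word_orbit (block2 _ _)).
apply: (ca_iter_between_columns columns); last by rewrite /y1 /y2; lia.
by move=> i i_in; apply: (cyl_agree cw c'w); rewrite sw; move: i_in; rewrite /y1 /y2; lia.
Qed.

End Blocking.

Lemma non_sensitive_blocking (Q : finType) (r : nat)
    (delta : {ffun 'I_(2 * r + 1) -> Q} -> Q) : ~ sensitive delta ->
  exists c0 m, (r <= m)%N /\ forall (c : config Q) n,
    agree_on m c0 c -> agree_on r (ca_iter delta n c0) (ca_iter delta n c).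
Proof.
move=> not_sensitive; apply: contrapT => no_blocking; apply: not_sensitive.
exists r => c m; apply: contrapT => stable; apply: no_blocking.
exists c, (maxn m r); split; first exact: leq_maxr.
move=> c' n cc'; apply: contrapT => split_orbits; apply: stable.
exists c', n; split => // i im; apply: cc'; lia.
Qed.

Section Persistence.
Variables (R : realType) (Q : finType) (r : nat).
Variables (delta : {ffun 'I_(2 * r + 1) -> Q} -> Q) (p : Q -> R).
Hypothesis p_pos : forall a, 0 < p a.
Hypothesis p_sum : \sum_(a : Q) p a = 1.
Local Notation A := (ca_iter delta).

Let p_ge0 a : 0 <= p a. Proof. exact: ltW. Qed.

Lemma pushforward_cylE n u : pushforward_cyl delta p n u =
  wmean p (size u + 2 * (n * r)) (fun s =>
    (`[< forall c : config Q, cyl s (- (n * r)%:Z) c -> cyl u 0 (A n c) >])%:R).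
Proof.
rewrite /pushforward_cyl big_mkcond -wmean_tuple; apply: eq_bigr => v _.
by case: ifP; rewrite ?mul1r ?mul0r.
Qed.

Lemma pushforward_cyl_ge0 n u : 0 <= pushforward_cyl delta p n u.
Proof. by rewrite pushforward_cylE; apply: wmean_ge0 => // s _; apply: ler0n. Qed.

Lemma wall_pushforward_lb W n : is_wall delta W -> (1 <= n)%N ->
  \prod_(x <- W 0%N) p x <= pushforward_cyl delta p n (W n).
Proof.
move=> Wwall n1; have Wcyl c := wall_cyl (c := c) Wwall n1.
move: (wall_size_le n Wwall) Wcyl; set w0 := W 0%N; set t := size w0.
move: (W n) => u ut Wcyl; set M := (size u + 2 * (n * r))%N.
(* [v] is the light cone window padded by [t] cells on each side, and [k] is the
   index in [v] at which the wall places its foot [w0]. *)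
set k := (t + n * r + (size u).+1 %/ 2 - t.+1 %/ 2)%N.
rewrite pushforward_cylE -(wmean_window p_sum (N := t + (M + t)) (k := t)); last by lia.
rewrite -(wmean_eq p_sum) -(wmean_window p_sum (N := t + (M + t)) (k := k) (M := t));
  last by rewrite /k /M; lia.
apply: ler_wmean => // v sv.
case: eqP => [w0_in_v|_]; last by rewrite ler_nat.
rewrite asboolT // => c cv.
set P := periodize (c 0) v (- (n * r)%:Z - t%:Z).
have Pv : cyl v (- (n * r)%:Z - t%:Z) P by apply: cyl_periodize.
have Pw0 : cyl w0 (((size u).+1 %/ 2)%:Z - (t.+1 %/ 2)%:Z) P.
  have -> : ((size u).+1 %/ 2)%:Z - (t.+1 %/ 2)%:Z = - (n * r)%:Z - t%:Z + k%:Z.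
    by rewrite /k; lia.
  by have := cyl_take_drop (n := t) (k := k) Pv; rewrite w0_in_v.
apply: eq_cyl0 (Wcyl _ Pw0) => j ju.
apply: (ca_iter_light_cone delta (x := 0) (y := (size u)%:Z)); last by lia.
have := cyl_take_drop (n := M) (k := t) Pv; rewrite subrK => Pwindow.
move=> i i_in; apply: (cyl_agree cv Pwindow).
by rewrite size_takel ?size_drop ?sv /M; lia.
Qed.

Lemma persistent_of_brick u : brick_of_wall delta u -> persistent delta p u.
Proof.
move=> [W [Wwall [P [n0 [P0 Wu]]]]] u_vanishing.
have w0_pos : 0 < \prod_(x <- W 0%N) p x by apply: prodr_gt0.
move/cvgrPdist_lt: u_vanishing => /(_ _ w0_pos) [N _ small].
have /small : (N <= P * N.+1 + n0)%N by nia.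
rewrite sub0r normrN ger0_norm ?pushforward_cyl_ge0 // -(Wu N.+1).
by apply/negP; rewrite -leNgt wall_pushforward_lb //; lia.
Qed.

Lemma determining_radius0 u w : r = 0%N -> size w = size u -> determining delta u 0 w.
Proof.
move=> r0 sw c c' cw c'w n j ju.
apply: (ca_iter_light_cone delta (x := 0) (y := (size u)%:Z)); last by lia.
by move=> i i_in; apply: (cyl_agree cw c'w); rewrite sw; move: i_in; rewrite r0; lia.
Qed.

(* [a] must stay below [n * r] for the words of length [size u + 2 * a] to fit in the
   light cone of [[u]_0] at time [n]; hence [a = 0] when [r = 0]. *)
Lemma undetermined_mass_small u eps : ~ sensitive delta -> 0 < eps ->
  exists a, (r = 0%N -> a = 0%N) /\
    wmean p (size u + 2 * a) (fun w => (~~ `[< determining delta u a w >])%:R) <= eps.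
Proof.
move=> not_sensitive eps0; have [r0|r0] := posnP r.
  exists 0%N; split => //; rewrite -(wmean_const p_sum (size u + 2 * 0) eps).
  apply: ler_wmean => // w sw; rewrite asboolT ?ltW //.
  by apply: determining_radius0; rewrite ?sw ?addn0.
have [c0 [m [r_le_m c0_blocking]]] := non_sensitive_blocking not_sensitive.
set b := blocking_word c0 m; set beta := \prod_(x <- b) p x.
have beta0 : 0 < beta by apply: prodr_gt0.
have beta1 : beta <= 1 by rewrite /beta -(wmean_eq p_sum) wmean_indicator_le1.
have [J small] : exists J, (1 - beta) ^+ J <= eps / 2.
  by apply: exists_expr_le; [apply/andP; split |]; lra.
exists (J * size b)%N; split; first by lia.
apply: le_trans (_ : _ <= wmean p _ (fun w => (~~ flanked b u J w)%:R)) _; last first.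
  by apply: le_trans (wmean_not_flanked p_ge0 p_sum b u J) _; rewrite -/beta mulr2n; lra.
apply: ler_wmean => // w sw; case: (asboolP (determining delta u _ w)) => [_|undet].
  by rewrite ler_nat.
have /negbTE-> : ~~ flanked b u J w.
  by apply/negP => /(flanked_determining r_le_m c0_blocking sw).
by rewrite ler_nat leq_b1.
Qed.

Lemma pushforward_cyl_le_undetermined u a n x0 : (a <= n * r)%N ->
  (forall w, size w = (size u + 2 * a)%N -> determining delta u a w ->
     ~ cyl u 0 (A n (periodize x0 w (- a%:Z)))) ->
  pushforward_cyl delta p n u <=
    wmean p (size u + 2 * a) (fun w => (~~ `[< determining delta u a w >])%:R).
Proof.
move=> a_le absent; rewrite pushforward_cylE.
have -> : (size u + 2 * (n * r) = (n * r - a) + ((size u + 2 * a) + (n * r - a)))%N by lia.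
rewrite -[X in _ <= X](wmean_const p_sum (n * r - a)) wmean_cat.
apply: ler_wmean => // x sx; rewrite wmean_cat; apply: ler_wmean => // w sw.
rewrite -[X in _ <= X](wmean_const p_sum (n * r - a)); apply: ler_wmean => // y _.
case: (asboolP (determining delta u a w)) => [wdet|_]; last by rewrite lern1 leq_b1.
case: asboolP => //= u_at_n; exfalso; apply: (absent w sw wdet).
set c := periodize x0 (x ++ w ++ y) (- (n * r)%:Z).
have cw : cyl w (- a%:Z) c.
  have -> : - a%:Z = - (n * r)%:Z + (size x)%:Z by rewrite sx; lia.
  have := cyl_take_drop (n := size w) (k := size x)
    (cyl_periodize x0 (w := x ++ w ++ y) (- (n * r)%:Z)).
  by rewrite drop_size_cat // take_size_cat.
apply: eq_cyl0 (u_at_n c (cyl_periodize _ _)) => j ju.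
exact: wdet (cyl_periodize x0 _) cw n j ju.
Qed.

Lemma vanishing_of_not_brick u : ~ sensitive delta -> (0 < size u)%N ->
  ~ brick_of_wall delta u -> vanishing delta p u.
Proof.
move=> not_sensitive u0 not_brick; have [x0 _] : exists x0 : Q, True.
  by case: u u0 {not_brick} => // a; exists a.
rewrite /vanishing; apply/cvgrPdist_le => eps eps0.
have [a [a0 small]] := undetermined_mass_small u not_sensitive eps0.
have absent_from (w : (size u + 2 * a).-tuple Q) : exists N, determining delta u a w ->
    forall n, (N <= n)%N -> ~ cyl u 0 (A n (periodize x0 w (- a%:Z))).
  have [wdet|] := pselect (determining delta u a w); last by exists 0%N.
  apply: contrapT => recurrent; apply: not_brick.
  apply: (brick_of_determining (x0 := x0) u0 (size_tuple w) wdet) => N.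
  apply: contrapT => absent; apply: recurrent; exists N => _ n Nn u_at_n.
  by apply: absent; exists n.
have [N NP] := choice absent_from.
exists (maxn a (\max_(w : (size u + 2 * a).-tuple Q) N w)) => // n /= n_ge.
rewrite sub0r normrN ger0_norm ?pushforward_cyl_ge0 //.
apply: le_trans small; apply: pushforward_cyl_le_undetermined.
  have [r0|r0] := posnP r; first by rewrite a0.
  by apply: leq_trans (leq_pmulr _ r0); lia.
move=> w sw wdet; set wt := Tuple (introT eqP sw).
by apply: (NP wt wdet); apply: leq_trans n_ge; rewrite leq_max (leq_bigmax (F := N)) orbT.
Qed.

End Persistence.

Local Close Scope ring_scope.

Theorem mainTheorem1 (R : realType) (Q : finType) (r : nat)
  (delta : {ffun 'I_(2 * r + 1) -> Q} -> Q) (p : Q -> R) :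
  ~ sensitive delta ->
  complete_bernoulli p ->
  forall u : seq Q, u != [::] ->
    (persistent delta p u <-> brick_of_wall delta u).
Proof.
move=> not_sensitive [p_pos p_sum] u u_nil; split; last exact: persistent_of_brick.
move=> u_persistent; apply: contrapT => not_brick; apply: u_persistent.
by apply: vanishing_of_not_brick; rewrite // lt0n size_eq0.
Qed.
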